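(* Let $G$ be an unweighted digraph without loops with directed deformed graph Laplacian $M(t)$. If $\lambda\notin\{1,-1\}$ is a finite eigenvalue of the directed deformed graph Laplacian $M_i(t)$ of exactly one strongly connected or single node component $G_i$ of $G$ (and of no other component's), then the geometric multiplicity of $\lambda$ as an eigenvalue of $M(t)$ equals its geometric multiplicity as an eigenvalue of $M_i(t)$.
   Context: A digraph $G=(V,E)$, no loops or multiple edges, adjacency matrix $A$; $S=A\circ A^T$, $D=\mathrm{diag}(\mathrm{diag}(A^2))$; $M(t)=I-At+(D-I)t^2+(A-S)t^3$, and similarly $M_i(t)$ for the component $G_i$. Components are the induced subgraphs on the classes of ''$i=j$ or mutually reachable by directed walks''. The geometric multiplicity of an eigenvalue $\lambda$ is $\dim\ker M(\lambda)$. *)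

From HB Require Import structures.
From mathcomp Require Import all_boot all_order all_algebra.
Set Implicit Arguments. Unset Strict Implicit. Unset Printing Implicit Defensive.
Import Order.TTheory GRing.Theory Num.Theory.
Local Open Scope ring_scope.

(* A digraph on vertex set 'I_n is an edge relation e : rel 'I_n
   (no multiple edges automatically; "no loops" is the hypothesis ~~ e i i). *)

Definition adj (C : fieldType) (n : nat) (e : rel 'I_n) : 'M[C]_n :=
  \matrix_(i, j) (e i j)%:R.

Definition subadj (C : fieldType) (n : nat) (e : rel 'I_n) (K : {set 'I_n})
  : 'M[C]_#|K| :=
  \matrix_(a, b) (e (enum_val a) (enum_val b))%:R.

Definition Smx (C : fieldType) (m : nat) (A : 'M[C]_m) : 'M[C]_m :=
  \matrix_(i, j) (A i j * A j i).

Definition Dmx (C : fieldType) (m : nat) (A : 'M[C]_m) : 'M[C]_m :=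
  \matrix_(i, j) (if i == j then (A *m A) i i else 0).

Definition Mt (C : fieldType) (m : nat) (A : 'M[C]_m) (t : C) : 'M[C]_m :=
  1%:M - t *: A + t ^+ 2 *: (Dmx A - 1%:M) + t ^+ 3 *: (A - Smx A).

Definition is_eigenvalue (C : fieldType) (m : nat) (M : C -> 'M[C]_m) (l : C)
  : bool := \det (M l) == 0.

(* geometric multiplicity: dim ker M(lambda) (right kernel {x | M x = 0},
   represented as the row kernel of the transpose) *)
Definition geom_mult (C : fieldType) (m : nat) (M : C -> 'M[C]_m) (l : C)
  : nat := \rank (kermx (M l)^T).

Definition component (n : nat) (e : rel 'I_n) (i : 'I_n) : {set 'I_n} :=
  [set j | connect e i j && connect e j i].

Arguments adj C {n} e.
Arguments subadj C {n} e K.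

From HB Require Import structures.
From mathcomp Require Import all_boot all_order all_algebra.
Import Order.TTheory GRing.Theory Num.Theory.
Local Open Scope ring_scope.
Set Implicit Arguments. Unset Strict Implicit.

(* The argument is pure linear algebra on a block triangular matrix.  Order
   the vertices by reachability: an entry M(t)_{vw} with v <> w is a multiple
   of A_{vw}, so M(t)_{vw} <> 0 forces w to be reachable from v, and the
   principal submatrix of M(t) on a strongly connected component K is M_K(t)
   (2-cycles through K stay inside K, so even the diagonal term D agrees).
   For any square matrix N supported on the reachability relation we prove
   (section BlockTriangular), with K0 the component of i0:
   - rank N + |K0| <= n + rank N_K0, by splitting N along the vertices that
     reach K0 from outside (W), those that do not reach K0 (Q), and K0 itself;
     this gives dim ker N >= dim ker N_K0 with no further hypothesis;
   - if every other principal block N_K is invertible, then a kernel vector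
     of N vanishes wherever it must (by induction on the size of the set of
     vertices reachable from a vertex), so restriction to K0 maps ker N
     injectively into ker N_K0, whence dim ker N <= dim ker N_K0.
   The theorem is then the instance N = M(lambda). *)

Section Submatrices.
Variables (R : pzRingType) (n : nat).
Implicit Types (S : {set 'I_n}) (A : 'M[R]_n).

Definition principal S A : 'M[R]_#|S| := mxsub enum_val enum_val A.

(* The n x |S| matrix whose columns are the unit vectors of S; x *m incl S
   restricts a row vector x to the coordinates in S. *)
Definition incl S : 'M[R]_(n, #|S|) := mxsub id enum_val 1%:M.

Definition sel S : 'M[R]_n := diag_mx (\row_i (i \in S)%:R).

Lemma principal_incl S A : principal S A = (incl S)^T *m A *m incl S.
Proof.
have inclT : (incl S)^T = mxsub enum_val id 1%:M.
  by apply/matrixP => a w; rewrite !mxE eq_sym.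
rewrite inclT /principal -{1}(mulmx1 A) -{1}(mul1mx A) !mxsub_mul.
by rewrite mxsub_id.
Qed.

Lemma sum_enum_val_delta S (f : 'I_n -> R) u :
  \sum_(a < #|S|) (u == enum_val a)%:R * f (enum_val a) = if u \in S then f u else 0.
Proof.
rewrite -(big_enum_val (fun w => (u == w)%:R * f w)) /=.
case: ifP => uS; last first.
  by apply: big1 => w wS; case: eqP => [uw|]; [rewrite -uw uS in wS | rewrite mul0r].
rewrite (bigD1 u) //= eqxx mul1r big1 ?addr0 // => w /andP[_ /negbTE].
by rewrite eq_sym => ->; rewrite mul0r.
Qed.

Lemma sel_incl S : sel S = incl S *m (incl S)^T.
Proof.
apply/matrixP => i j; rewrite !mxE.
under eq_bigr do rewrite !mxE.
rewrite (sum_enum_val_delta S (fun w => (j == w)%:R)).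
by case: (i \in S); rewrite ?mul0rn // eq_sym; case: eqP.
Qed.

Lemma sel_compl S : sel S + sel (~: S) = 1%:M.
Proof.
apply/matrixP => i j; rewrite !mxE inE -mulrnDl.
by case: (i \in S); rewrite /= ?addr0 ?add0r.
Qed.

Lemma sel_principal S A : sel S *m A *m sel S = incl S *m principal S A *m (incl S)^T.
Proof. by rewrite sel_incl principal_incl !mulmxA. Qed.

End Submatrices.

Arguments incl {R n} S.
Arguments sel {R n} S.

Section SubmatrixRank.
Variables (F : fieldType) (n : nat).
Implicit Types (S : {set 'I_n}).

Lemma rank_sel_mul p S (X : 'M[F]_(n, p)) : (\rank (sel S *m X) <= #|S|)%N.
Proof.
by rewrite sel_incl -mulmxA (leq_trans (mxrankM_maxl _ _)) ?rank_leq_col.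
Qed.

Lemma rank_mul_sel p S (X : 'M[F]_(p, n)) : (\rank (X *m sel S) <= #|S|)%N.
Proof.
by rewrite sel_incl mulmxA (leq_trans (mxrankM_maxr _ _)) ?rank_leq_row.
Qed.

End SubmatrixRank.

Lemma ker_rank_le (F : fieldType) m p k q (A : 'M[F]_(m, p)) (B : 'M[F]_(k, q))
    (P : 'M[F]_(m, k)) :
  (forall x : 'rV_m, x *m A = 0 -> x *m P *m B = 0) ->
  (forall x : 'rV_m, x *m A = 0 -> x *m P = 0 -> x = 0) ->
  (\rank (kermx A) <= \rank (kermx B))%N.
Proof.
move=> PB Pinj; set X := kermx A.
have kerX y : (y <= X)%MS -> y *m A = 0.
  by move=> /submxP[D ->]; rewrite -mulmxA mulmx_ker mulmx0.
have /mxrank_injP <- : (X :&: kermx P)%MS == 0.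
  apply/eqP/row_matrixP => i; rewrite row0; apply: Pinj.
    exact/kerX/(submx_trans (row_sub _ _))/capmxSl.
  exact/sub_kermxP/(submx_trans (row_sub _ _))/capmxSr.
apply/mxrankS/sub_kermxP/row_matrixP => i.
by rewrite row0 (row_mul i (X *m P)) (row_mul i X) PB // kerX ?row_sub.
Qed.

Section Reachability.
Variables (n : nat) (e : rel 'I_n).

(* Strongly connected components, and the size of the set of vertices
   reachable from a vertex, which strictly decreases when leaving a
   component; this is the measure for the induction in kernel_vanishing. *)
Lemma componentP j u :
  reflect (connect e j u /\ connect e u j) (u \in component e j).
Proof. by rewrite inE; apply: andP. Qed.

Lemma mem_component j : j \in component e j.
Proof. by apply/componentP; split; apply: connect0. Qed.

Lemma component_succ j v u :
  v \in component e j -> connect e v u -> connect e u j -> u \in component e j.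
Proof.
move=> /componentP[jv _] vu uj; apply/componentP; split=> //.
exact: connect_trans jv vu.
Qed.

Lemma reach_proper w u :
  connect e w u -> u \notin component e w ->
  (#|[set z | connect e u z]| < #|[set z | connect e w z]|)%N.
Proof.
move=> wu uKw; apply/proper_card/properP; split.
  by apply/subsetP => z; rewrite !inE; apply: connect_trans.
exists w; rewrite !inE ?connect0 //.
by apply: contra uKw => uw; apply/componentP.
Qed.

End Reachability.

Section BlockTriangular.
Variables (C : fieldType) (n : nat) (e : rel 'I_n) (N : 'M[C]_n).
(* N is block triangular for the reachability preorder of e. *)
Hypothesis N_supp : forall v w, N v w != 0 -> connect e v w.

Lemma principal_row_sum j (x : 'I_n -> C) :
  (forall u, connect e j u -> u \notin component e j -> x u = 0) ->
  forall a, \sum_b principal (component e j) N a b * x (enum_val b)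
          = \sum_w N (enum_val a) w * x w.
Proof.
move=> x_out a; set K := component e j; set v := enum_val a.
have /componentP[jv _] : v \in K by apply: enum_valP.
under eq_bigr do rewrite mxE.
rewrite -(big_enum_val (fun u => N v u * x u)) /= [RHS](bigID (mem K)) /=.
rewrite [X in _ = _ + X]big1 ?addr0 // => u uK.
have [->|/N_supp vu] := eqVneq (N v u) 0; first by rewrite mul0r.
by rewrite x_out ?mulr0 //; apply: connect_trans jv vu.
Qed.

Variable i0 : 'I_n.
Let K0 := component e i0.

(* With W the vertices outside K0 that reach K0 and Q those that do not reach
   K0, N has zero blocks (K0,W), (Q,W), (Q,K0); deleting the rows in W and
   the columns in Q leaves the block N_K0, hence the rank bound. *)
Lemma rank_le_principal : (\rank N + #|K0| <= n + \rank (principal K0 N))%N.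
Proof.
set U := [set u | connect e u i0]; set W := U :\: K0; set Q := ~: U.
have corner v u : connect e v u ->
    (v \in ~: W) && (u \in ~: Q) = (v \in K0) && (u \in K0).
  rewrite /W /Q /K0 !inE negbK => vu.
  have [ui|] := boolP (connect e u i0); last by rewrite !andbF.
  rewrite (connect_trans vu ui) andbT /=.
  by case: (boolP (connect e i0 v)) => // iv; rewrite (connect_trans iv vu).
have split_N : N = sel W *m N + sel (~: W) *m N *m sel Q + sel K0 *m N *m sel K0.
  have <- : sel (~: W) *m N *m sel (~: Q) = sel K0 *m N *m sel K0.
    apply/matrixP => v u; rewrite !mul_mx_diag !mul_diag_mx !mxE.
    have [->|/N_supp/corner vu] := eqVneq (N v u) 0; first by rewrite !mulr0 !mul0r.
    by rewrite [LHS]mulrAC [RHS]mulrAC -!natrM !mulnb vu.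
  by rewrite -addrA -mulmxDr sel_compl mulmx1 -mulmxDl sel_compl mul1mx.
have card_split : (#|W| + #|Q| + #|K0| = n)%N.
  have K0U : K0 \subset U by apply/subsetP => u /componentP[_ ui]; rewrite inE.
  have := cardsC U; have := cardsID K0 U; rewrite (setIidPr K0U) card_ord.
  by move=> sizeU sizeT; apply: etrans sizeT; rewrite -sizeU addnC addnA.
have rank_corner : (\rank (sel K0 *m N *m sel K0) <= \rank (principal K0 N))%N.
  rewrite sel_principal (leq_trans (mxrankM_maxl _ _)) //; exact: mxrankM_maxr.
have rank_N : (\rank N <= #|W| + #|Q| + \rank (principal K0 N))%N.
  rewrite {1}split_N (leq_trans (mxrank_add _ _)) // leq_add //.
  rewrite (leq_trans (mxrank_add _ _)) // leq_add //.
    exact: rank_sel_mul.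
  exact: rank_mul_sel.
apply: leq_trans (leq_add rank_N (leqnn #|K0|)) _.
by rewrite -[X in (_ <= X + _)%N]card_split addnAC.
Qed.

Hypothesis principal_unit :
  forall j, component e j != K0 -> principal (component e j) N \in unitmx.

(* A kernel vector x of N vanishes on any set T closed under reachability
   on which it vanishes inside K0: at a vertex w of T outside K0, x already
   vanishes on the strict successors of w (induction), so its restriction to
   the component of w lies in the kernel of the invertible block there. *)
Lemma kernel_vanishing (x : 'I_n -> C) (T : pred 'I_n) :
  (forall v, \sum_w N v w * x w = 0) ->
  (forall w u, T w -> connect e w u -> T u) ->
  (forall w, T w -> w \in K0 -> x w = 0) ->
  forall w, T w -> x w = 0.
Proof.
move=> ker_x T_closed x_K0 w.
elim: {w}_.+1 {-2}w (ltnSn #|[set z | connect e w z]|) => // m IH w.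
rewrite ltnS => w_le Tw.
have [wK0|wK0] := boolP (w \in K0); first exact: x_K0.
have wK := mem_component e w; set K := component e w in wK *.
have K_unit : principal K N \in unitmx.
  by apply: principal_unit; apply: contraNneq wK0 => <-.
have x_succ u : connect e w u -> u \notin K -> x u = 0.
  move=> wu uK; apply: IH (T_closed _ _ Tw wu).
  exact: leq_trans (reach_proper wu uK) w_le.
pose y : 'cV[C]_#|K| := \col_a x (enum_val a).
have : principal K N *m y = 0.
  apply/matrixP => a k; rewrite mxE [RHS]mxE.
  under eq_bigr do rewrite [y _ _]mxE.
  by rewrite (principal_row_sum x_succ) ker_x.
move/(congr1 (mulmx (invmx (principal K N)))); rewrite mulKmx // mulmx0.
by move/matrixP/(_ (enum_rank_in wK w) 0); rewrite !mxE enum_rankK_in.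
Qed.

(* Restriction to K0 injects ker N into ker N_K0: kernel vectors vanish on
   the vertices not reaching K0, and vanish identically once zero on K0. *)
Lemma ker_rank_le_principal :
  (\rank (kermx N^T) <= \rank (kermx (principal K0 N)^T))%N.
Proof.
have ker_sum (x : 'rV_n) : x *m N^T = 0 -> forall v, \sum_w N v w * x 0 w = 0.
  move=> xN v; transitivity ((x *m N^T) 0 v); last by rewrite xN mxE.
  by rewrite mxE; apply: eq_bigr => w _; rewrite mxE mulrC.
have x_incl (x : 'rV_n) : x *m incl K0 = \row_a x 0 (enum_val a).
  by rewrite mulmx_colsub mulmx1; apply/matrixP => i a; rewrite !mxE ord1.
apply: (ker_rank_le (P := incl K0)) => x xN.
  have x_out u : connect e i0 u -> u \notin K0 -> x 0 u = 0.
    move=> i0u uK0; apply: (kernel_vanishing (ker_sum x xN)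
                             (T := [pred z | ~~ connect e z i0])) => /=.
    - by move=> w z wi0 wz; apply: contra wi0; apply: connect_trans.
    - by move=> w /negP wi0 /componentP[].
    - by apply: contra uK0 => ui0; apply/componentP.
  apply/matrixP => i a; rewrite x_incl mxE [RHS]mxE.
  under eq_bigr do rewrite [(\row__ _) _ _]mxE [_^T _ _]mxE mulrC.
  by rewrite (principal_row_sum x_out) ker_sum.
move=> x_incl0; apply/matrixP => i u; rewrite ord1 [RHS]mxE.
apply: (kernel_vanishing (ker_sum x xN) (T := predT)) => // w _ wK0.
move/matrixP: x_incl0 => /(_ 0 (enum_rank_in wK0 w)).
by rewrite x_incl !mxE enum_rankK_in.
Qed.

Theorem ker_rank_principal :
  \rank (kermx N^T) = \rank (kermx (principal K0 N)^T).
Proof.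
apply/eqP; rewrite eqn_leq ker_rank_le_principal /= !mxrank_ker !mxrank_tr.
rewrite leq_subLR addnBA ?rank_leq_row // leq_subRL; last first.
  exact: leq_trans (rank_leq_row N) (leq_addl _ _).
by rewrite [X in (_ <= X)%N]addnC rank_le_principal.
Qed.

End BlockTriangular.

Section DeformedLaplacian.
Variables (F : fieldType) (n : nat).
Implicit Types (A : 'M[F]_n) (S : {set 'I_n}).

Lemma Mt_offdiag A t v w : v != w -> A v w = 0 -> Mt A t v w = 0.
Proof.
move=> /negbTE vw Avw; rewrite /Mt !mxE vw Avw /=.
by rewrite !(mulr0, mul0r, subr0, sub0r, oppr0, addr0).
Qed.

Lemma Mt_principal A S t :
  (forall v w, v \in S -> A v w * A w v != 0 -> w \in S) ->
  Mt (principal S A) t = principal S (Mt A t).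
Proof.
move=> S_closed; apply/matrixP => a b; rewrite /Mt !mxE (inj_eq enum_val_inj).
case: eqP => [<-|_] //; congr (_ + _ * (_ - _) + _).
set v := enum_val a; have vS : v \in S by apply: enum_valP.
under eq_bigr do rewrite !mxE.
rewrite -(big_enum_val (fun w => A v w * A w v)) /= [RHS](bigID (mem S)) /=.
rewrite [X in _ = _ + X]big1 ?addr0 // => w wS.
by apply/eqP; apply: contraNT wS; apply: S_closed.
Qed.

End DeformedLaplacian.

Section Digraph.
Variables (C : fieldType) (n : nat) (e : rel 'I_n).

Lemma Mt_adj_supp t v w : Mt (adj C e) t v w != 0 -> connect e v w.
Proof.
have [->|vw] := eqVneq v w; first by rewrite connect0.
apply: contraR => not_vw; apply/eqP/Mt_offdiag => //.
by rewrite mxE (contraNF (@connect1 _ e v w) not_vw).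
Qed.

Lemma Mt_component t j :
  Mt (subadj C e (component e j)) t = principal (component e j) (Mt (adj C e) t).
Proof.
have -> : subadj C e (component e j) = principal (component e j) (adj C e).
  by apply/matrixP => a b; rewrite !mxE.
apply: Mt_principal => v w vK; rewrite !mxE -natrM mulnb.
have [/andP[vw wv] _|_] := boolP (e v w && e w v); last by rewrite eqxx.
have /componentP[_ vj] := vK.
exact: component_succ vK (connect1 vw) (connect_trans (connect1 wv) vj).
Qed.

End Digraph.

Unset Implicit Arguments.
Set Strict Implicit.

Theorem proposition3p7 (C : numClosedFieldType) (n : nat) (e : rel 'I_n)
  (no_loops : forall i, ~~ e i i) (l : C) (i0 : 'I_n) :
  l != 1 -> l != -1 ->
  is_eigenvalue (Mt (subadj C e (component e i0))) l ->
  (forall j : 'I_n, component e j != component e i0 ->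
     ~~ is_eigenvalue (Mt (subadj C e (component e j))) l) ->
  geom_mult (Mt (adj C e)) l = geom_mult (Mt (subadj C e (component e i0))) l.
Proof.
move=> _ _ _ others_regular.
rewrite /geom_mult Mt_component; apply: ker_rank_principal => [v w|j Kj].
  exact: Mt_adj_supp.
by rewrite -Mt_component unitmxE unitfE; apply: others_regular.
Qed.
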